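(* For every $n\ge1$, letting $k_n=\lceil\log_2 n\rceil$, $$c_n=\sum_{j=1}^{k_n-1}2^j\, s(2^{-j}n),$$ where $s(x)=\min_{z\in\mathbb{Z}}|x-z|$ is the distance from $x\in\mathbb{R}$ to the nearest integer.
   Context: Bifurcating trees: rooted trees in which every internal node has exactly two children; $\mathcal{T}_n$ is the set of isomorphism classes of bifurcating trees with $n$ leaves. For a node $w$, $\kappa_T(w)$ is its number of descendant leaves. The Colless index is $\mathcal{C}(T)=\sum_{v}|\kappa_T(v_1)-\kappa_T(v_2)|$, summed over internal nodes $v$ with children $v_1,v_2$; $c_n=\min\{\mathcal{C}(T):T\in\mathcal{T}_n\}$. *)

From mathcomp Require Import all_boot all_order all_algebra.
Set Implicit Arguments. Unset Strict Implicit. Unset Printing Implicit Defensive.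
Import Order.TTheory GRing.Theory Num.Theory.

Inductive btree : Type := Leaf | Node of btree & btree.

Fixpoint leaves (T : btree) : nat :=
  match T with Leaf => 1 | Node l r => leaves l + leaves r end.

Fixpoint colless (T : btree) : nat :=
  match T with
  | Leaf => 0
  | Node l r => absz (Posz (leaves l) - Posz (leaves r))%R + colless l + colless r
  end.

Definition is_min_colless (n c : nat) : Prop :=
  (exists T, leaves T = n /\ colless T = c) /\
  (forall T, leaves T = n -> c <= colless T).

Local Open Scope ring_scope.

(* s(x) = min_{z in Z} |x - z|, the distance to the nearest integer
   (nearest integers are floor x and floor x + 1). *)
Definition dist_int (x : rat) : rat :=
  Num.min (x - (Num.floor x)%:~R) (((Num.floor x) + 1)%:~R - x).

(* sum_{j=1}^{k_n - 1} 2^j s(2^{-j} n), with k_n = ceil(log2 n) = up_log 2 n. *)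
Definition colless_formula (n : nat) : rat :=
  \sum_(1 <= j < up_log 2 n) (2 ^+ j) * dist_int (n%:R / 2 ^+ j).

From mathcomp Require Import all_boot all_order all_algebra.
From mathcomp Require Import zify ring lra.
Import Order.TTheory GRing.Theory Num.Theory.

(* Scaling by 2^j turns each term 2^j s(n/2^j) of the formula into the natural
   number [dist_mult (2^j) n], the distance from n to the nearest multiple of
   2^j; we call the resulting sum [colless_nat n].  The proof has three parts.
   1. Arithmetic of [dist_mult] gives the two recurrences
        colless_nat (2x) = 2 colless_nat x,
        colless_nat (2x+1) = colless_nat x + colless_nat (x+1) + 1   (x >= 1),
      i.e. colless_nat (p + q) = colless_nat p + colless_nat q + |p - q| for
      every balanced split (p, q >= 1, |p - q| <= 1).
   2. Balanced splits are optimal: for all a, b >= 1,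
        colless_nat (a + b) <= colless_nat a + colless_nat b + |a - b|,
      proved by strong induction, cutting a and b into balanced halves and
      regrouping them into a balanced split of a + b.
   3. By induction on trees, colless_nat (leaves T) <= colless T, and the
      recursively balanced tree attains the bound; finally the rational
      formula equals colless_nat n term by term. *)

Definition dist_mult (M n : nat) : nat := minn (n %% M) (M - n %% M).

Definition colless_nat (n : nat) : nat :=
  \sum_(1 <= j < up_log 2 n) dist_mult (2 ^ j) n.

Lemma modn_def a b q r : r < b -> a = q * b + r -> a %% b = r.
Proof. by move=> ltrb ->; rewrite modnMDl modn_small. Qed.

Lemma dist_mult1 n : dist_mult 1 n = 0.
Proof. by rewrite /dist_mult modn1. Qed.

Lemma dist_multnn M : dist_mult M M = 0.
Proof. by rewrite /dist_mult modnn min0n. Qed.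

Lemma dist_mult_double M m : dist_mult (2 * M) (2 * m) = 2 * dist_mult M m.
Proof. rewrite /dist_mult -muln_modr; lia. Qed.

Lemma dist_mult2_odd m : dist_mult 2 (2 * m + 1) = 1.
Proof. rewrite /dist_mult (@modn_def _ _ m 1) //; lia. Qed.

Lemma dist_mult_odd M m : 0 < M ->
  dist_mult (2 * (2 * M)) (2 * m + 1) =
  dist_mult (2 * M) m + dist_mult (2 * M) m.+1.
Proof.
move=> M0; rewrite /dist_mult; set N := 2 * M.
have ltrN : m %% N < N by rewrite ltn_pmod //; lia.
have m_eq := divn_eq m N.
set q := m %/ N in m_eq; set r := m %% N in ltrN m_eq *.
have -> : (2 * m + 1) %% (2 * N) = 2 * r + 1 by apply: (@modn_def _ _ q); lia.
have [->|[-> rN]] : m.+1 %% N = r.+1 \/ (m.+1 %% N = 0 /\ r.+1 = N).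
  case: (ltnP r.+1 N) => h.
    by left; apply: (@modn_def _ _ q); lia.
  by right; split; [apply: (@modn_def _ _ q.+1); lia | lia].
all: rewrite /N in ltrN *; lia.
Qed.

Lemma colless_nat0 : colless_nat 0 = 0.
Proof. by rewrite /colless_nat up_log0 big_geq. Qed.

Lemma colless_nat1 : colless_nat 1 = 0.
Proof. by rewrite /colless_nat up_log1 big_geq. Qed.

Lemma colless_nat_double x : colless_nat (2 * x) = 2 * colless_nat x.
Proof.
case: x => [|x]; first by rewrite muln0 colless_nat0.
rewrite /colless_nat up_logMp // big_add1 /=.
under eq_bigr => j _ do rewrite expnS dist_mult_double.
rewrite -big_distrr /=; congr (2 * _).
case: (up_log 2 x.+1) => [|k]; first by rewrite !big_geq.
by rewrite big_ltn // (dist_mult1 x.+1) add0n.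
Qed.

(* Passing from x to x+1 changes the range of the sum only when x = 2^k,
   where the extra term dist_mult (2^k) x vanishes. *)
Lemma colless_nat_range_succ x :
  \sum_(1 <= j < up_log 2 x.+1) dist_mult (2 ^ j) x = colless_nat x.
Proof.
have [->|x0] := posnP x; first by rewrite colless_nat0 up_log1 big_geq.
rewrite /colless_nat; set k := up_log 2 x; set K := up_log 2 x.+1.
have x_le : x <= 2 ^ k := @up_logP 2 x isT.
have kK : k <= K by apply: leq_up_log.
have Kk : K <= k.+1 by apply: up_log_min; rewrite // expnS; lia.
have [->//|Kk1] : K = k \/ K = k.+1 by lia.
have x_pow : x = 2 ^ k.
  have := @up_log_gtn 2 x.+1 isT (ltac:(lia)); rewrite -/K Kk1 /=; lia.
rewrite Kk1; clearbody k K.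
case: k x_pow {x_le kK Kk Kk1} => [|k] x_pow; first by rewrite !big_geq.
by rewrite big_nat_recr //= -x_pow dist_multnn addn0.
Qed.

Lemma colless_nat_odd x : 0 < x ->
  colless_nat (2 * x + 1) = colless_nat x + colless_nat x.+1 + 1.
Proof.
move=> x0.
have logS : up_log 2 (2 * x + 1) = (up_log 2 x.+1).+1.
  by rewrite addn1 up_log2S ?mul2n ?doubleK //; lia.
have K0 : 0 < up_log 2 x.+1 by rewrite up_log_gt0; lia.
rewrite {1}/colless_nat logS big_ltn; last by lia.
rewrite dist_mult2_odd big_add1 /=.
rewrite (@eq_big_nat _ _ _ _ _ _
  (fun j => dist_mult (2 ^ j) x + dist_mult (2 ^ j) x.+1)); last first.
  by move=> [|j] //= _; rewrite !expnS dist_mult_odd ?expn_gt0.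
by rewrite big_split /= colless_nat_range_succ -/(colless_nat x.+1); lia.
Qed.

Lemma colless_nat_balanced p q : 0 < p -> 0 < q -> `|p - q|%N <= 1 ->
  colless_nat (p + q) = colless_nat p + colless_nat q + `|p - q|%N.
Proof.
wlog le_pq : p q / p <= q => [sym|p0 q0 bal].
  case: (leqP p q) => [|/ltnW] le; first exact: sym.
  by move=> p0 q0 bal; rewrite addnC (sym q p) //; lia.
have [->|->] : q = p \/ q = p.+1 by lia.
  by rewrite addnn -mul2n colless_nat_double; lia.
by rewrite addnS -addn1 addnn -mul2n colless_nat_odd //; lia.
Qed.

Lemma colless_nat_halves a : 1 < a ->
  exists a1 a2, [/\ a = a1 + a2, a1 <= a2, a2 <= a1.+1, 0 < a1 &
    colless_nat a = colless_nat a1 + colless_nat a2 + `|a1 - a2|%N].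
Proof.
move=> gt1_a; exists a./2, (uphalf a).
have [a_eq le_h le_u] :
    [/\ a = a./2 + uphalf a, a./2 <= uphalf a & uphalf a <= (a./2).+1].
  have := odd_double_half a; rewrite uphalf_half -addnn.
  by case: odd => /= ?; split; lia.
split=> //; first lia.
by rewrite {1}a_eq colless_nat_balanced //; lia.
Qed.

Lemma colless_nat_merge n a b : a + b = n -> 0 < a -> 0 < b ->
  colless_nat n <= colless_nat a + colless_nat b + `|a - b|%N.
Proof.
elim/ltn_ind: n a b => n IH a b.
wlog le_ba : a b / b <= a => [sym ab a0 b0|ab a0 b0].
  case: (leqP b a) => [le|/ltnW le]; first exact: sym le ab a0 b0.
  by have := sym b a le ltac:(lia) b0 a0; lia.
subst n.
have [->|gt1_b] : b = 1 \/ 1 < b by lia.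
  have [->|gt1_a] : a = 1 \/ 1 < a by lia.
    by rewrite colless_nat_balanced.
  (* a + 1 = (a1 + 1) + a2 is balanced; bound the part a1 + 1 by induction *)
  have [a1 [a2 [a_eq le_a12 le_a21 a1_gt0 ca]]] := colless_nat_halves _ gt1_a.
  have IH1 := IH (a1 + 1) ltac:(lia) a1 1 erefl a1_gt0 isT.
  have -> : a + 1 = (a1 + 1) + a2 by lia.
  rewrite colless_nat_balanced; rewrite ?colless_nat1 in IH1 *; lia.
(* regroup the quarters: a + b = (a1 + b2) + (a2 + b1) is again balanced *)
have [a1 [a2 [a_eq le_a12 le_a21 a1_gt0 ca]]] :=
  colless_nat_halves _ (leq_trans gt1_b le_ba).
have [b1 [b2 [b_eq le_b12 le_b21 b1_gt0 cb]]] := colless_nat_halves _ gt1_b.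
have IH1 := IH (a1 + b2) ltac:(lia) a1 b2 erefl a1_gt0 ltac:(lia).
have IH2 := IH (a2 + b1) ltac:(lia) a2 b1 erefl ltac:(lia) b1_gt0.
have -> : a + b = (a1 + b2) + (a2 + b1) by lia.
rewrite colless_nat_balanced; lia.
Qed.

Lemma leaves_gt0 T : 0 < leaves T.
Proof. by elim: T => //= l IHl r _; rewrite addn_gt0 IHl. Qed.

Lemma colless_nat_le T : colless_nat (leaves T) <= colless T.
Proof.
elim: T => [|l IHl r IHr] /=; first by rewrite colless_nat1.
have := colless_nat_merge _ _ _ erefl (leaves_gt0 l) (leaves_gt0 r); lia.
Qed.

Lemma colless_nat_attained n : 0 < n ->
  exists T, leaves T = n /\ colless T = colless_nat n.
Proof.
elim/ltn_ind: n => n IH n0.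
have [->|n2] : n = 1 \/ 1 < n by lia.
  by exists Leaf; rewrite colless_nat1.
have [a1 [a2 [n_eq le_a12 le_a21 a1_gt0 cn]]] := colless_nat_halves _ n2.
have [T1 [l1 c1]] := IH a1 ltac:(lia) a1_gt0.
have [T2 [l2 c2]] := IH a2 ltac:(lia) ltac:(lia).
by exists (Node T1 T2) => /=; rewrite l1 l2 c1 c2 cn; lia.
Qed.

Local Open Scope ring_scope.

(* For 0 <= y < 1 the nearest integers to z + y are z and z + 1. *)
Lemma dist_int_shift (z : int) (y : rat) : 0 <= y < 1 ->
  dist_int (z%:~R + y) = Num.min y (1 - y).
Proof.
move=> /andP[y0 y1].
have floor_zy : Num.floor (z%:~R + y) = z.
  apply: floor_def; rewrite intrD /= (_ : 1%:~R = 1 :> rat) //.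
  by apply/andP; split; lra.
rewrite /dist_int floor_zy intrD /= (_ : 1%:~R = 1 :> rat) //.
by congr Num.min; ring.
Qed.

Lemma dist_int_scaled (M n : nat) : (0 < M)%N ->
  M%:R * dist_int (n%:R / M%:R) = (dist_mult M n)%:R :> rat.
Proof.
move=> M0; have MR0 : M%:R != 0 :> rat by rewrite pnatr_eq0 -lt0n.
set r := (n %% M)%N; have ltrM : (r < M)%N by rewrite ltn_pmod.
have -> : n%:R / M%:R = (n %/ M)%N%:~R + r%:R / M%:R :> rat.
  by rewrite {1}(divn_eq n M) natrD natrM; field.
rewrite dist_int_shift; last first.
  by rewrite divr_ge0 //= ltr_pdivrMr ?ltr0n // mul1r ltr_nat.
rewrite minr_pMr ?ler0n // mulrBr mulr1 mulrC divfK //.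
rewrite -natrB; last exact: ltnW.
rewrite /dist_mult -/r; case: (leqP r (M - r)) => h.
  by rewrite min_l ?ler_nat.
by rewrite min_r ?ler_nat // ltnW.
Qed.

Theorem theorem3 (n : nat) (hn : (1 <= n)%N) :
  exists c : nat, is_min_colless n c /\ (c%:R : rat) = colless_formula n.
Proof.
exists (colless_nat n); split; [split|].
- exact: colless_nat_attained.
- by move=> T <-; apply: colless_nat_le.
- rewrite /colless_formula /colless_nat natr_sum; apply: eq_bigr => j _.
  by rewrite -dist_int_scaled ?expn_gt0 // natrX.
Qed.
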